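(* Suppose that $\mathbf P\big(\min(\eta(X),1-\eta(X))\le\varepsilon\big)>0$ for every $\varepsilon>0$. Then, for any choice of the thresholds $\tau_\gamma$ (as described below), $\lim_{\gamma\to1^-}\tau_\gamma=1$, and $\mathcal R^*:=\lim_{\gamma\to1^-}\mathcal R(\gamma)=0$.
   Context: Setup (binary classification with indecisions). $(\mathcal X,\mathcal U)$ is a measurable space with a $\sigma$-finite measure $\mu$; $P_1\neq P_2$ are probability measures with densities $f_1,f_2$ w.r.t. $\mu$; $p_1,p_2>0$, $p_1+p_2=1$; $\mathbf P(Y=i)=p_i$ and given $Y=i$, $X\sim P_i$. A classifier is a measurable $\tilde Y(X,U)\in\{0,1,2\}$ with $U\sim\mathrm{Unif}[0,1]$ independent of $(X,Y)$; $0$ means indecision. $\eta(x)=\frac{p_1f_1(x)}{p_1f_1(x)+p_2f_2(x)}$. $\mathcal R(\gamma):=\inf\mathbf P(\tilde Y\neq Y\mid\tilde Y\neq0)$ over classifiers with $\mathbf P(\tilde Y=0)=\gamma$; $\gamma\mapsto\mathcal R(\gamma)$ is non-increasing and nonnegative on $[0,1)$. For $\gamma\in[0,1)$, $\tau_\gamma\in[1/2,1]$ denotes a threshold for which there is a classifier $Y^*_\gamma$ with $\mathbf P(Y^*_\gamma=0)=\gamma$, a.s. $\{1-\tau_\gamma<\eta(X)<\tau_\gamma\}\subset\{Y^*_\gamma=0\}\subset\{1-\tau_\gamma\le\eta(X)\le\tau_\gamma\}$, and $Y^*_\gamma=\arg\max_i p_if_i(X)$ on $\{Y^*_\gamma\neq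 0\}$; such $Y^*_\gamma$ attains $\mathcal R(\gamma)$. *)

From HB Require Import structures.
From mathcomp Require Import all_boot all_order all_algebra.
From mathcomp Require Import all_classical all_reals all_analysis.
Set Implicit Arguments. Unset Strict Implicit. Unset Printing Implicit Defensive.
Import Order.TTheory GRing.Theory Num.Theory.
Import numFieldNormedType.Exports.
Local Open Scope classical_set_scope.
Local Open Scope ring_scope.

Section Setup.
Context {d : measure_display} {T : measurableType d} {R : realType}.
Variables (mu : {measure set T -> \bar R}) (f1 f2 : T -> R) (p1 p2 : R).

Definition pf (i : nat) (x : T) : R :=
  if i == 1%N then p1 * f1 x else if i == 2%N then p2 * f2 x else 0.

(* eta(x) = p1 f1 / (p1 f1 + p2 f2)  (= 0 where the denominator is 0, a P-null set) *)
Definition eta_reg (x : T) : R := p1 * f1 x / (p1 * f1 x + p2 * f2 x).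

Definition probX (A : set T) : \bar R :=
  (\int[mu]_(x in A) (p1 * f1 x + p2 * f2 x)%:E)%E.

Definition unif01 (B : set R) : \bar R :=
  lebesgue_measure (B `&` `[0%R, 1%R]).

(* P(Y = i, (X,U) in A), with U independent of (X,Y) *)
Definition probYXU (i : nat) (A : set (T * R)) : \bar R :=
  (\int[mu]_x ((pf i x)%:E * unif01 [set u | A (x, u)]))%E.

Definition probXU (A : set (T * R)) : \bar R :=
  (probYXU 1 A + probYXU 2 A)%E.

(* a (randomized) classifier: measurable map (x,u) |-> {0,1,2}, 0 = indecision *)
Definition is_classifier (g : T * R -> nat) : Prop :=
  (forall k : nat, measurable (g @^-1` [set k])) /\ (forall z, (g z <= 2)%N).

Definition P0 (g : T * R -> nat) : \bar R := probXU [set z | g z = 0%N].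
Definition Pnz (g : T * R -> nat) : \bar R := probXU [set z | g z <> 0%N].
(* P(Ytilde <> Y, Ytilde <> 0) *)
Definition Perr (g : T * R -> nat) : \bar R :=
  (probYXU 1 [set z | g z = 2%N] + probYXU 2 [set z | g z = 1%N])%E.
Definition cond_err (g : T * R -> nat) : \bar R :=
  (fine (Perr g) / fine (Pnz g))%:E.

Definition Rcal (gamma : R) : \bar R :=
  ereal_inf [set cond_err g | g in [set g | is_classifier g /\ P0 g = gamma%:E]].

Definition is_threshold (gamma t : R) : Prop :=
  2^-1 <= t <= 1 /\
  exists g, is_classifier g /\ P0 g = gamma%:E /\
    probXU [set z | 1 - t < eta_reg z.1 < t /\ g z <> 0%N] = 0%E /\
    probXU [set z | g z = 0%N /\ ~ (1 - t <= eta_reg z.1 <= t)] = 0%E /\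
    (* a.s. on {g <> 0}, g = argmax_i p_i f_i(X) *)
    probXU [set z | g z = 1%N /\ p1 * f1 z.1 < p2 * f2 z.1] = 0%E /\
    probXU [set z | g z = 2%N /\ p2 * f2 z.1 < p1 * f1 z.1] = 0%E.

End Setup.

From HB Require Import structures.
From mathcomp Require Import all_boot all_order all_algebra.
From mathcomp Require Import all_classical all_reals all_analysis.
From mathcomp Require Import measurable_realfun lra.
Set Implicit Arguments. Unset Strict Implicit. Unset Printing Implicit Defensive.
Import Order.TTheory GRing.Theory Num.Theory.
Import numFieldNormedType.Exports.
Local Open Scope classical_set_scope.
Local Open Scope ring_scope.

(* If the thresholds tau_gamma stayed below 1 - delta for gamma close to 1, the
   optimal classifier abstaining with probability gamma would abstain (up to a null
   set) only where 1 - tau_gamma <= eta <= tau_gamma, a region disjoint from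
   {min(eta, 1 - eta) <= delta}; hence gamma + P(min(eta, 1 - eta) <= delta) <= 1,
   which fails for gamma near 1 since that probability is positive. Thus
   tau_gamma -> 1. Outside the band 1 - tau < eta < tau the same classifier
   predicts argmax_i p_i f_i, so the weight p_j f_j of the other label is at most
   (1 - tau) (p_1 f_1 + p_2 f_2); this gives R(gamma) <= 1 - tau_gamma -> 0. *)

Lemma measurable_inv (R : realType) : measurable_fun [set: R] (@GRing.inv R).
Proof.
rewrite -(setvU [set 0%R]); apply/measurable_funU => //; first exact: measurableC.
split; last exact: measurable_fun_set1.
apply: open_continuous_measurable_fun; last first.
  by move=> x; rewrite inE /= => /eqP x0; exact: inv_continuous.
exact/closed_openC/accessible_closed_set1/hausdorff_accessible/Rhausdorff.
Qed.

Section MeasurableFacts.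
Context {d : measure_display} {T : measurableType d} {R : realType}.

Lemma measurable_ltr_set (a b : T -> R) : measurable_fun setT a ->
  measurable_fun setT b -> measurable [set x | a x < b x].
Proof.
move=> ma mb; have := measurable_fun_ltr ma mb measurableT.
by move=> /(_ [set true] Logic.I); rewrite setTI; congr measurable; apply/seteqP.
Qed.

Lemma measurable_itv_preimage (f : T -> R) (i : interval R) :
  measurable_fun setT f -> measurable [set x | f x \in i].
Proof.
move=> mf; have := mf measurableT _ (measurable_itv i).
by rewrite setTI; congr measurable; apply/seteqP; split => x /=; rewrite inE.
Qed.

Lemma measurable_fst_preimage (S : set T) :
  measurable S -> measurable ([set z | S z.1] : set (T * R)).
Proof.
move=> mS; suff -> : ([set z | S z.1] : set (T * R)) = S `*` setT.
  exact: measurableX.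
by apply/seteqP; split => z //= [].
Qed.

Lemma measurable_funMl (p : R) (f : T -> R) :
  measurable_fun setT f -> measurable_fun setT (fun x => p * f x).
Proof. by move=> mf; apply: measurable_funM => //; exact: measurable_cst. Qed.

End MeasurableFacts.

Section UniformSection.
Context {d : measure_display} {T : measurableType d} {R : realType}.

Definition unif_section (A : set (T * R)) (x : T) : \bar R :=
  unif01 [set u | A (x, u)].

Lemma unif01_setT : unif01 [set: R] = 1%E.
Proof.
by rewrite /unif01 setTI lebesgue_measure_itv /= lte_fin ltr01 -EFinB subr0.
Qed.

Lemma measurable_slice (A : set (T * R)) x : measurable A ->
  measurable ([set u | A (x, u)] `&` `[0%R, 1%R]).
Proof.
move=> mA; apply: measurableI => //; have := measurable_xsection x mA.
by congr measurable; apply/seteqP; split => u; rewrite /xsection /= ?inE.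
Qed.

Lemma measurable_unif_section (A : set (T * R)) :
  measurable A -> measurable_fun setT (unif_section A).
Proof.
move=> mA; have mB : measurable (A `&` (setT `*` `[0%R, 1%R])).
  by apply: measurableI => //; exact: measurableX.
apply: eq_measurable_fun (measurable_fun_xsection lebesgue_measure mB) => x _.
rewrite /unif_section /unif01; congr lebesgue_measure.
apply/seteqP; split => u; rewrite /xsection /= inE /=.
  by move=> -[Au [_ I01]].
by move=> -[Au I01].
Qed.

Lemma unif_section_ge0 A x : (0 <= unif_section A x)%E.
Proof. exact: measure_ge0. Qed.

Lemma le_unif_section (A B : set (T * R)) x : measurable A -> measurable B ->
  (forall u, A (x, u) -> B (x, u)) -> (unif_section A x <= unif_section B x)%E.
Proof.
move=> mA mB AB; apply: le_measure; rewrite ?inE; try exact: measurable_slice.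
by move=> u [/AB].
Qed.

Lemma unif_section_le1 A x : measurable A -> (unif_section A x <= 1)%E.
Proof.
by move=> mA; rewrite -unif01_setT; exact: (@le_unif_section A setT x).
Qed.

Lemma unif_section_fst (C : set T) x :
  unif_section [set z | C z.1] x = if x \in C then 1%E else 0%E.
Proof.
rewrite /unif_section; case: ifPn => [/set_mem Cx|/negP]; last rewrite in_setE => Cx.
  by rewrite -unif01_setT; congr unif01; apply/seteqP; split.
rewrite /unif01 -(measure0 lebesgue_measure); congr lebesgue_measure.
by apply/seteqP; split => u // [].
Qed.

Lemma unif_section_setU_le (A B : set (T * R)) x : measurable A -> measurable B ->
  (unif_section (A `|` B) x <= unif_section A x + unif_section B x)%E.
Proof.
move=> mA mB; rewrite /unif_section /unif01.
apply: le_trans (@measureU2 _ _ _ (@lebesgue_measure R) _ _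
  (measurable_slice x mA) (measurable_slice x mB)).
apply: le_measure; rewrite ?inE; try exact: measurable_slice.
- exact: measurable_slice x (measurableU _ _ mA mB).
- exact: measurableU _ _ (measurable_slice x mA) (measurable_slice x mB).
- by move=> u [[Au|Bu] I01]; [left|right].
Qed.

Lemma unif_section_setU (A B : set (T * R)) x : measurable A -> measurable B ->
  A `&` B = set0 -> unif_section (A `|` B) x = (unif_section A x + unif_section B x)%E.
Proof.
move=> mA mB AB0; rewrite /unif_section /unif01 -measureU; try exact: measurable_slice.
  by congr lebesgue_measure; rewrite setIUl.
apply/seteqP; split => u //= [[Au _] [Bu _]].
by have : (A `&` B) (x, u) by []; rewrite AB0.
Qed.

End UniformSection.

Section WeightedIntegral.
Context {d : measure_display} {T : measurableType d} {R : realType}.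
Variables (mu : {measure set T -> \bar R}) (w : T -> R).
Hypotheses (mw : measurable_fun setT w) (w_ge0 : forall x, 0 <= w x).

Definition wint (h : T -> \bar R) : \bar R := (\int[mu]_x ((w x)%:E * h x))%E.

Let mwE : measurable_fun setT (fun x => (w x)%:E).
Proof. exact/measurable_EFinP. Qed.

Let wh_ge0 (h : T -> \bar R) : (forall x, 0 <= h x)%E ->
  forall x, (0 <= (w x)%:E * h x)%E.
Proof. by move=> h0 x; rewrite mule_ge0 ?lee_fin. Qed.

Lemma le_wint h1 h2 : measurable_fun setT h1 -> measurable_fun setT h2 ->
  (forall x, 0 <= h1 x)%E -> (forall x, h1 x <= h2 x)%E -> (wint h1 <= wint h2)%E.
Proof.
move=> m1 m2 h10 h12; apply: ge0_le_integral => //.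
- by move=> x _; exact: wh_ge0.
- exact: emeasurable_funM mwE m1.
- exact: emeasurable_funM mwE m2.
- by move=> x _; rewrite lee_wpmul2l ?lee_fin.
Qed.

Lemma wintD h1 h2 : measurable_fun setT h1 -> measurable_fun setT h2 ->
  (forall x, 0 <= h1 x)%E -> (forall x, 0 <= h2 x)%E ->
  wint (fun x => h1 x + h2 x)%E = (wint h1 + wint h2)%E.
Proof.
move=> m1 m2 h10 h20; rewrite /wint -ge0_integralD //.
- by apply: eq_integral => x _; rewrite ge0_muleDr.
- by move=> x _; exact: wh_ge0.
- exact: emeasurable_funM mwE m1.
- by move=> x _; exact: wh_ge0.
- exact: emeasurable_funM mwE m2.
Qed.

Lemma integral_le_scale_wint (b : T -> R) (c : R) (h n : T -> \bar R) :
  0 <= c -> measurable_fun setT b -> (forall x, 0 <= b x <= w x) ->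
  measurable_fun setT h -> measurable_fun setT n ->
  (forall x, 0 <= h x)%E -> (forall x, 0 <= n x)%E -> wint n = 0%E ->
  (forall x, c * w x < b x -> (h x <= n x)%E) ->
  (\int[mu]_x ((b x)%:E * h x) <= c%:E * wint h)%E.
Proof.
move=> c0 mb bw mh mn h0 n0 wn0 hn.
have mwh := emeasurable_funM mwE mh.
apply: (@le_trans _ _ (\int[mu]_x (c%:E * ((w x)%:E * h x) + (w x)%:E * n x))%E).
  apply: ge0_le_integral => //.
  - by move=> x _; have /andP[b0 _] := bw x; rewrite mule_ge0 ?lee_fin.
  - by apply: emeasurable_funM mh; exact/measurable_EFinP.
  - apply: emeasurable_funD (emeasurable_funM mwE mn).
    exact: emeasurable_funM (measurable_cst _) mwh.
  move=> x _; have /andP[b0 bwx] := bw x.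
  have cwh0 : (0 <= c%:E * ((w x)%:E * h x))%E by rewrite mule_ge0 ?lee_fin ?wh_ge0.
  have [cwb|bcw] := ltP (c * w x) (b x).
  - have bwE : ((b x)%:E <= (w x)%:E)%E by rewrite lee_fin.
    apply: le_trans (leeDr _ cwh0); apply: le_trans (lee_wpmul2r (h0 x) bwE) _.
    by rewrite lee_wpmul2l ?lee_fin // hn.
  - apply: le_trans (leeDl _ (wh_ge0 n0 x)).
    by rewrite muleA -EFinM lee_wpmul2r ?lee_fin.
rewrite ge0_integralD //.
- by rewrite ge0_integralZl ?lee_fin //; [rewrite -/(wint h) -/(wint n) wn0 adde0|move=> x _; exact: wh_ge0].
- by move=> x _; rewrite mule_ge0 ?lee_fin ?wh_ge0.
- exact: emeasurable_funM (measurable_cst _) mwh.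
- by move=> x _; exact: wh_ge0.
- exact: emeasurable_funM mwE mn.
Qed.

End WeightedIntegral.

Lemma in_band_ratio (R : realFieldType) (a b t : R) : 0 <= a -> 0 <= b ->
  2^-1 <= t <= 1 -> (1 - t) * (a + b) < a -> (1 - t) * (a + b) < b ->
  1 - t < a / (a + b) < t.
Proof.
move=> a0 b0 /andP[t1 t2] ha hb; have ab0 : 0 < a + b by nra.
have : a / (a + b) * (a + b) = a by rewrite divfK // gt_eqF.
by set r := a / (a + b) => hr; apply/andP; split; nra.
Qed.

Section Classification.
Context {d : measure_display} {T : measurableType d} {R : realType}.
Variables (mu : {measure set T -> \bar R}) (f1 f2 : T -> R) (p1 p2 : R).
Hypotheses (mf1 : measurable_fun setT f1) (mf2 : measurable_fun setT f2)
  (f1_ge0 : forall x, 0 <= f1 x) (f2_ge0 : forall x, 0 <= f2 x)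
  (int_f1 : (\int[mu]_x (f1 x)%:E = 1)%E) (int_f2 : (\int[mu]_x (f2 x)%:E = 1)%E)
  (p1_gt0 : 0 < p1) (p2_gt0 : 0 < p2) (p1p2 : p1 + p2 = 1).

Local Notation eta := (eta_reg f1 f2 p1 p2).
Local Notation PYXU := (probYXU mu f1 f2 p1 p2).
Local Notation PXU := (probXU mu f1 f2 p1 p2).

Definition mix (x : T) : R := p1 * f1 x + p2 * f2 x.

Lemma pf1_ge0 x : 0 <= p1 * f1 x. Proof. by rewrite mulr_ge0 // ltW. Qed.
Lemma pf2_ge0 x : 0 <= p2 * f2 x. Proof. by rewrite mulr_ge0 // ltW. Qed.
Lemma pf_ge0 i x : 0 <= pf f1 f2 p1 p2 i x.
Proof. by rewrite /pf; case: ifP => _; [|case: ifP => _]; rewrite ?pf1_ge0 ?pf2_ge0. Qed.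

Lemma mix_ge0 x : 0 <= mix x. Proof. by rewrite addr_ge0 ?pf1_ge0 ?pf2_ge0. Qed.

Lemma measurable_mix : measurable_fun setT mix.
Proof. exact: measurable_funD (measurable_funMl _ mf1) (measurable_funMl _ mf2). Qed.

Lemma measurable_eta : measurable_fun setT eta.
Proof.
apply: measurable_funM; first exact: measurable_funMl.
exact: (measurableT_comp (@measurable_inv R) measurable_mix).
Qed.

Local Notation wint := (wint mu mix).

Lemma wint_cst1 : wint (fun _ => 1%E) = 1%E.
Proof.
have int_pf (p : R) (f : T -> R) : 0 <= p -> measurable_fun setT f -> (forall x, 0 <= f x) ->
    (\int[mu]_x (f x)%:E = 1)%E -> (\int[mu]_x (p * f x)%:E = p%:E)%E.
  move=> p0 mf f0 intf; under eq_integral do rewrite EFinM.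
  by rewrite ge0_integralZl_EFin ?intf ?mule1 //; [move=> x _; rewrite lee_fin|
    exact/measurable_EFinP].
rewrite /wint; under eq_integral do rewrite mule1 /mix EFinD.
rewrite ge0_integralD //; first by rewrite !int_pf ?ltW // -EFinD p1p2.
- by move=> x _; rewrite lee_fin pf1_ge0.
- exact/measurable_EFinP/measurable_funMl.
- by move=> x _; rewrite lee_fin pf2_ge0.
- exact/measurable_EFinP/measurable_funMl.
Qed.

Lemma probXU_wint A : measurable A -> PXU A = wint (unif_section A).
Proof.
move=> mA; rewrite /probXU /probYXU /= /wint -ge0_integralD //.
- apply: eq_integral => x _.
  by rewrite /mix EFinD ge0_muleDl // lee_fin ?pf1_ge0 ?pf2_ge0.
- by move=> x _; rewrite mule_ge0 ?unif_section_ge0 // lee_fin pf1_ge0.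
- apply: emeasurable_funM (measurable_unif_section mA).
  exact/measurable_EFinP/measurable_funMl.
- by move=> x _; rewrite mule_ge0 ?unif_section_ge0 // lee_fin pf2_ge0.
- apply: emeasurable_funM (measurable_unif_section mA).
  exact/measurable_EFinP/measurable_funMl.
Qed.

Lemma probYXU_ge0 i A : (0 <= PYXU i A)%E.
Proof.
by apply: integral_ge0 => x _; rewrite mule_ge0 ?lee_fin ?pf_ge0 ?unif_section_ge0.
Qed.

Lemma probXU_ge0 A : (0 <= PXU A)%E.
Proof. exact: adde_ge0 (probYXU_ge0 _ _) (probYXU_ge0 _ _). Qed.

Lemma probXU_setT : PXU setT = 1%E.
Proof.
rewrite probXU_wint // -wint_cst1; congr wint; apply: funext => x.
exact: unif01_setT.
Qed.

Lemma le_probXU_null A B N : measurable A -> measurable B -> measurable N ->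
  A `<=` B `|` N -> PXU N = 0%E -> (PXU A <= PXU B)%E.
Proof.
move=> mA mB mN ABN N0; have mBN := measurableU _ _ mB mN.
rewrite !probXU_wint // in N0 *.
apply: le_trans (le_wint _ measurable_mix mix_ge0 (h2 := fun x =>
    unif_section B x + unif_section N x)%E _ _ _ _) _.
- exact: measurable_unif_section.
- exact: emeasurable_funD (measurable_unif_section mB) (measurable_unif_section mN).
- by move=> x; exact: unif_section_ge0.
- move=> x; apply: le_trans (unif_section_setU_le x mB mN).
  by apply: le_unif_section => // u /ABN.
rewrite (wintD _ measurable_mix mix_ge0) ?N0 ?adde0 //;
  by [exact: measurable_unif_section | move=> x; exact: unif_section_ge0].
Qed.

Lemma probXU_setU A B : measurable A -> measurable B -> A `&` B = set0 ->
  PXU (A `|` B) = (PXU A + PXU B)%E.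
Proof.
move=> mA mB AB0; rewrite !probXU_wint //; last exact: measurableU.
rewrite -(wintD _ measurable_mix mix_ge0);
  try by [exact: measurable_unif_section | move=> x; exact: unif_section_ge0].
by congr wint; apply: funext => x; rewrite unif_section_setU.
Qed.

Lemma probX_probXU S : measurable S ->
  probX mu f1 f2 p1 p2 S = PXU [set z | S z.1].
Proof.
move=> mS; rewrite (probXU_wint (measurable_fst_preimage mS)) /probX /wint.
rewrite integral_mkcond; apply: eq_integral => x _.
by rewrite patchE unif_section_fst; case: ifP; rewrite ?mule1 ?mule0.
Qed.

Lemma probXU_le1 A : measurable A -> (PXU A <= 1)%E.
Proof.
move=> mA; rewrite probXU_wint // -wint_cst1.
apply: (le_wint _ measurable_mix mix_ge0).
- exact: measurable_unif_section.
- exact: measurable_cst.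
- by move=> x; exact: unif_section_ge0.
- by move=> x; exact: unif_section_le1.
Qed.

Lemma measurable_classifier_neq0 g : is_classifier g ->
  measurable [set z : T * R | g z <> 0%N].
Proof. by case=> mg _; exact: measurableC (mg 0%N). Qed.

Lemma classifier_setU21 g : is_classifier g ->
  [set z | g z = 2%N] `|` [set z | g z = 1%N] = [set z : T * R | g z <> 0%N].
Proof.
move=> [_ g_le2]; apply/seteqP; split => z /=; first by case=> ->.
by have := g_le2 z; case: (g z) => [|[|[|]]] //; [right|left].
Qed.

Lemma Pnz_P0 g (gamma : R) : is_classifier g -> P0 mu f1 f2 p1 p2 g = gamma%:E ->
  Pnz mu f1 f2 p1 p2 g = (1 - gamma)%:E.
Proof.
move=> cg P0g; have [mg _] := cg.
have : PXU [set z | g z <> 0%N] + PXU [set z | g z = 0%N] = 1%E.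
  rewrite -probXU_setU; [|exact: measurable_classifier_neq0 cg|exact: mg|].
    suff -> : [set z | g z <> 0%N] `|` [set z | g z = 0%N] = setT by exact: probXU_setT.
    apply/seteqP; split => // z _ /=.
    by case: (eqVneq (g z) 0%N) => [->|/eqP]; [right|left].
  by apply/seteqP; split => // z [].
rewrite -/(P0 mu f1 f2 p1 p2 g) P0g -/(Pnz mu f1 f2 p1 p2 g).
have := probXU_ge0 [set z | g z <> 0%N].
by case: (Pnz _ _ _ _ _ _) => // r _ /(congr1 fine) /= <-; rewrite addrK.
Qed.

Lemma probXU_setU_null A B : measurable A -> measurable B ->
  PXU A = 0%E -> PXU B = 0%E -> PXU (A `|` B) = 0%E.
Proof.
move=> mA mB A0 B0; apply/eqP; rewrite eq_le probXU_ge0 andbT -A0.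
exact: le_probXU_null (measurableU _ _ mA mB) mA mB (@subset_refl _ _) B0.
Qed.

Lemma integral_le_probXU (b : T -> R) (c : R) (G Z : set (T * R)) :
  0 <= c -> measurable G -> measurable Z -> measurable_fun setT b ->
  (forall x, 0 <= b x <= mix x) -> PXU Z = 0%E ->
  (forall z, G z -> c * mix z.1 < b z.1 -> Z z) ->
  (\int[mu]_x ((b x)%:E * unif_section G x) <= c%:E * PXU G)%E.
Proof.
move=> c0 mG mZ mb bmix Z0 GZ; rewrite probXU_wint //.
rewrite probXU_wint // in Z0.
apply: (integral_le_scale_wint measurable_mix mix_ge0 c0 mb bmix _ _ _ _ Z0).
- exact: measurable_unif_section.
- exact: measurable_unif_section.
- by move=> x; exact: unif_section_ge0.
- by move=> x; exact: unif_section_ge0.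
- by move=> x cb; apply: le_unif_section => // u /GZ; apply.
Qed.

Lemma measurable_band (t : R) : measurable [set z : T * R | 1 - t < eta z.1 < t].
Proof.
apply: (@measurable_fst_preimage _ _ _ [set x | 1 - t < eta x < t]).
by have := measurable_itv_preimage `](1 - t), t[ measurable_eta; congr measurable.
Qed.

Lemma Perr_le g (t : R) : is_classifier g -> 2^-1 <= t <= 1 ->
  PXU [set z | 1 - t < eta z.1 < t /\ g z <> 0%N] = 0%E ->
  PXU [set z | g z = 1%N /\ p1 * f1 z.1 < p2 * f2 z.1] = 0%E ->
  PXU [set z | g z = 2%N /\ p2 * f2 z.1 < p1 * f1 z.1] = 0%E ->
  (Perr mu f1 f2 p1 p2 g <= (1 - t)%:E * Pnz mu f1 f2 p1 p2 g)%E.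
Proof.
move=> cg t_bounds N0 M1 M2; have [mg _] := cg.
have mN : measurable [set z | 1 - t < eta z.1 < t /\ g z <> 0%N].
  exact: measurableI (measurable_band t) (measurable_classifier_neq0 cg).
have mlt (a b : T -> R) : measurable_fun setT a -> measurable_fun setT b ->
    measurable [set z : T * R | a z.1 < b z.1].
  by move=> ma mb; exact: (measurable_fst_preimage (measurable_ltr_set ma mb)).
have mM1 : measurable [set z | g z = 1%N /\ p1 * f1 z.1 < p2 * f2 z.1].
  exact: measurableI (mg 1%N) (mlt _ _ (measurable_funMl _ mf1) (measurable_funMl _ mf2)).
have mM2 : measurable [set z | g z = 2%N /\ p2 * f2 z.1 < p1 * f1 z.1].
  exact: measurableI (mg 2%N) (mlt _ _ (measurable_funMl _ mf2) (measurable_funMl _ mf1)).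
have t0 : 0 <= 1 - t by case/andP: t_bounds => _; rewrite subr_ge0.
have in_band x : (1 - t) * mix x < p1 * f1 x -> (1 - t) * mix x < p2 * f2 x ->
    1 - t < eta x < t.
  exact: in_band_ratio (pf1_ge0 x) (pf2_ge0 x) t_bounds.
have E1 : (PYXU 2 [set z | g z = 1%N] <= (1 - t)%:E * PXU [set z | g z = 1%N])%E.
  apply: integral_le_probXU t0 (mg 1%N) (measurableU _ _ mN mM1) (measurable_funMl _ mf2) _
    (probXU_setU_null mN mM1 N0 M1) _.
    by move=> x; rewrite pf2_ge0 lerDr pf1_ge0.
  move=> z /= gz1 large2; have [lt12|le21] := ltP (p1 * f1 z.1) (p2 * f2 z.1).
    by right.
  by left; rewrite in_band ?gz1 //; exact: lt_le_trans le21.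
have E2 : (PYXU 1 [set z | g z = 2%N] <= (1 - t)%:E * PXU [set z | g z = 2%N])%E.
  apply: integral_le_probXU t0 (mg 2%N) (measurableU _ _ mN mM2) (measurable_funMl _ mf1) _
    (probXU_setU_null mN mM2 N0 M2) _.
    by move=> x; rewrite pf1_ge0 lerDl pf2_ge0.
  move=> z /= gz2 large1; have [lt21|le12] := ltP (p2 * f2 z.1) (p1 * f1 z.1).
    by right.
  by left; rewrite in_band ?gz2 //; exact: lt_le_trans le12.
have g12_disj : [set z | g z = 2%N] `&` [set z | g z = 1%N] = set0.
  by apply/seteqP; split => // z [/= ->].
apply: le_trans (leeD E2 E1) _.
by rewrite -ge0_muleDr ?probXU_ge0 // -(probXU_setU (mg 2%N) (mg 1%N) g12_disj)
  (classifier_setU21 cg).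
Qed.

Lemma measurable_min_eta_le (delta : R) :
  measurable [set x | Num.min (eta x) (1 - eta x) <= delta].
Proof.
have mmin : measurable_fun setT (fun x => Num.min (eta x) (1 - eta x)).
  apply: measurable_minr measurable_eta _.
  by apply: measurable_funB measurable_eta; exact: measurable_cst.
by have := measurable_itv_preimage `]-oo, delta] mmin; congr measurable.
Qed.

Lemma P0_add_probX_le1 g (gamma t delta : R) : is_classifier g ->
  P0 mu f1 f2 p1 p2 g = gamma%:E ->
  PXU [set z | g z = 0%N /\ ~ (1 - t <= eta z.1 <= t)] = 0%E -> t < 1 - delta ->
  (gamma%:E + probX mu f1 f2 p1 p2
     [set x | (Num.min (eta x) (1 - eta x) <= delta)%R] <= 1)%E.
Proof.
move=> [mg _] P0g N0 t_delta.
set C := [set x | 1 - t <= eta x <= t].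
set S := [set x | Num.min (eta x) (1 - eta x) <= delta].
have mC : measurable C.
  by have := measurable_itv_preimage `[1 - t, t] measurable_eta; congr measurable.
have mS : measurable S := measurable_min_eta_le delta.
have [mCz mSz] := (measurable_fst_preimage (R := R) mC, measurable_fst_preimage (R := R) mS).
have P0C : (gamma%:E <= PXU [set z | C z.1])%E.
  rewrite -P0g; apply: (le_probXU_null (mg 0%N) mCz _ _ N0).
    exact: measurableI (mg 0%N) (measurable_fst_preimage (measurableC mC)).
  by move=> z gz0; case: (pselect (C z.1)) => Cz; [left|right].
have CS0 : [set z : T * R | C z.1] `&` [set z | S z.1] = set0.
  apply/seteqP; split => z // [/= /andP[lo hi]]; rewrite /S /= ge_min => /orP[]; lra.
rewrite probX_probXU //; apply: le_trans (leeD P0C (lexx _)) _.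
by rewrite -probXU_setU //; exact: probXU_le1 (measurableU _ _ mCz mSz).
Qed.

Lemma Perr_ge0 g : (0 <= Perr mu f1 f2 p1 p2 g)%E.
Proof. exact: adde_ge0 (probYXU_ge0 _ _) (probYXU_ge0 _ _). Qed.

Lemma Rcal_ge0 (gamma : R) : (0 <= Rcal mu f1 f2 p1 p2 gamma)%E.
Proof.
apply/ereal_infP => _ [g _ <-]; rewrite lee_fin divr_ge0 //.
  exact/fine_ge0/Perr_ge0.
exact/fine_ge0/probXU_ge0.
Qed.

Lemma Rcal_le_threshold (gamma t : R) : gamma < 1 ->
  is_threshold mu f1 f2 p1 p2 gamma t -> (Rcal mu f1 f2 p1 p2 gamma <= (1 - t)%:E)%E.
Proof.
move=> gamma1 [t_bounds [g [cg [P0g [N0 [_ [M1 M2]]]]]]].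
apply: ge_ereal_inf; exists (cond_err mu f1 f2 p1 p2 g); first by exists g.
have := Perr_le cg t_bounds N0 M1 M2; rewrite /cond_err (Pnz_P0 cg P0g) -EFinM /=.
have gamma1' : 0 < 1 - gamma by rewrite subr_gt0.
move: (Perr_ge0 g); case: (Perr _ _ _ _ _ g) => [r||] //=; rewrite !lee_fin => _ r_le.
by rewrite ler_pdivrMr.
Qed.

Lemma threshold_near1 (tau : R -> R) :
  (forall eps : R, 0 < eps -> (0 < probX mu f1 f2 p1 p2
     [set x | (Num.min (eta x) (1 - eta x) <= eps)%R])%E) ->
  (forall gamma : R, 0 <= gamma < 1 -> is_threshold mu f1 f2 p1 p2 gamma (tau gamma)) ->
  forall e : R, 0 < e ->
    \forall gamma \near (1 : R)^'-, 0 <= gamma < 1 /\ 1 - e <= tau gamma <= 1.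
Proof.
move=> mass_pos thr e e0.
set S := [set x | (Num.min (eta x) (1 - eta x) <= e)%R].
have mS : measurable S := measurable_min_eta_le e.
have S_le1 : (probX mu f1 f2 p1 p2 S <= 1)%E.
  by rewrite probX_probXU //; exact: probXU_le1 (measurable_fst_preimage mS).
move: (mass_pos e e0) S_le1; rewrite -/S.
case Sr : (probX _ _ _ _ _ S) => [r| |] //; rewrite lte_fin lee_fin => r0 r1.
near=> gamma.
have gamma0 : 0 < gamma by near: gamma; apply: nbhs_left_gt; exact: ltr01.
have gamma1 : gamma < 1 by near: gamma; exact: nbhs_left_lt.
have gamma_r : 1 - r < gamma by near: gamma; apply: nbhs_left_gt; lra.
have gamma01 : 0 <= gamma < 1 by rewrite gamma1 ltW.
have [/andP[_ tau1] [g [cg [P0g [_ [N0 _]]]]]] := thr gamma gamma01.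
split => //; rewrite tau1 andbT leNgt; apply/negP => tau_small.
by have := P0_add_probX_le1 cg P0g N0 tau_small; rewrite -/S Sr -EFinD lee_fin; lra.
Unshelve. all: by end_near.
Qed.

End Classification.

Theorem lemma1 (d : measure_display) (T : measurableType d) (R : realType)
  (mu : {measure set T -> \bar R}) (f1 f2 : T -> R) (p1 p2 : R) (tau : R -> R) :
  sigma_finite setT mu ->
  measurable_fun setT f1 -> measurable_fun setT f2 ->
  (forall x, 0 <= f1 x) -> (forall x, 0 <= f2 x) ->
  (\int[mu]_x (f1 x)%:E = 1)%E -> (\int[mu]_x (f2 x)%:E = 1)%E ->
  (exists A : set T, measurable A /\
     (\int[mu]_(x in A) (f1 x)%:E != \int[mu]_(x in A) (f2 x)%:E)%E) ->
  0 < p1 -> 0 < p2 -> p1 + p2 = 1 ->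
  (forall eps : R, 0 < eps ->
     (0 < probX mu f1 f2 p1 p2
            [set x | (Num.min (eta_reg f1 f2 p1 p2 x) (1 - eta_reg f1 f2 p1 p2 x) <= eps)%R])%E) ->
  (forall gamma : R, 0 <= gamma < 1 ->
     is_threshold mu f1 f2 p1 p2 gamma (tau gamma)) ->
  tau x @[x --> (1:R)^'-] --> (1:R) /\
  Rcal mu f1 f2 p1 p2 x @[x --> (1:R)^'-] --> (0%:E : \bar R).
Proof.
move=> _ mf1 mf2 f1_ge0 f2_ge0 int_f1 int_f2 _ p1_gt0 p2_gt0 p1p2 mass_pos thr.
have near_tau := threshold_near1 mf1 mf2 f1_ge0 f2_ge0 int_f1 int_f2 p1_gt0 p2_gt0 p1p2
  mass_pos thr.
have Rcal_real gamma : 0 <= gamma < 1 ->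
    exists2 r : R, Rcal mu f1 f2 p1 p2 gamma = r%:E & 0 <= r <= 1 - tau gamma.
  move=> gamma01; have /andP[_ gamma1] := gamma01.
  have := Rcal_le_threshold mf1 mf2 f1_ge0 f2_ge0 int_f1 int_f2 p1_gt0 p2_gt0 p1p2
    gamma1 (thr _ gamma01).
  have := Rcal_ge0 mu f1_ge0 f2_ge0 p1_gt0 p2_gt0 gamma.
  by case: (Rcal mu f1 f2 p1 p2 gamma) => [r| |] //; rewrite !lee_fin => r0 r1; exists r;
    rewrite ?r0.
split.
  apply/cvgrPdist_le => e e0; apply: filterS (near_tau e e0) => gamma [_ /andP[lo hi]].
  by rewrite ger0_norm; lra.
apply: cvg_EFin.
  by apply: filterS (near_tau 1 ltr01) => gamma [/Rcal_real[r -> _]].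
apply/cvgrPdist_le => e e0; apply: filterS (near_tau e e0) => gamma /=.
move=> [/Rcal_real[r -> /andP[r0 r1]] /andP[lo _]].
by rewrite sub0r normrN ger0_norm //=; lra.
Qed.
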